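(* Let $t\geq 3$ be an integer and let $q$ be a prime power with $2t-1\leq q<4t-3$. Then there exists an MS$(q^{2t-1},t)$.
   Context: An $n\times n$ integer matrix $A=(a_{i,j})$ is a general magic square if the sums of the entries in each row, each column, the main diagonal $\{a_{i,i}\}$ and the back diagonal $\{a_{i,n-1-i}\}$ are all equal. For a positive integer $t$, a general magic square $M=(m_{i,j})$ is a general $t$-multimagic square if for every $e=1,\dots,t$ the entrywise power $M^{*e}=(m_{i,j}^{e})$ is a general magic square. A general $t$-multimagic square of order $n$ whose entries are $n^2$ consecutive integers is denoted MS$(n,t)$. *)

From HB Require Import structures.
From mathcomp Require Import all_boot all_order all_algebra.
Set Implicit Arguments. Unset Strict Implicit. Unset Printing Implicit Defensive.
Import Order.TTheory GRing.Theory Num.Theory.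
Local Open Scope ring_scope.

Definition general_magic (n : nat) (A : 'M[int]_n) : Prop :=
  exists s : int,
    (forall i : 'I_n, \sum_(j < n) A i j = s) /\
    (forall j : 'I_n, \sum_(i < n) A i j = s) /\
    \sum_(i < n) A i i = s /\
    \sum_(i < n) A i (rev_ord i) = s.

Definition general_multimagic (n t : nat) (M : 'M[int]_n) : Prop :=
  forall e : nat, (1 <= e <= t)%N -> general_magic (map_mx (fun x => x ^+ e) M).

Definition consecutive_entries (n : nat) (M : 'M[int]_n) : Prop :=
  exists a : int,
    (forall i j : 'I_n, a <= M i j < a + (n ^ 2)%:Z) /\
    (forall i j k l : 'I_n, M i j = M k l -> i = k /\ j = l).

Definition is_MS (n t : nat) (M : 'M[int]_n) : Prop :=
  general_multimagic t M /\ consecutive_entries M.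

Definition prime_power (q : nat) : Prop :=
  exists p k : nat, prime p /\ (0 < k)%N /\ q = (p ^ k)%N.

From HB Require Import structures.
From mathcomp Require Import all_boot all_order all_algebra all_field.
From mathcomp Require Import zify ring.
Set Implicit Arguments. Unset Strict Implicit. Unset Printing Implicit Defensive.
Import Order.TTheory GRing.Theory Num.Theory.

(** Write m = 2t - 1 and let F be the field with q elements. A vector of F^m is
   read as a pair of polynomials (g, f) with deg g < t - 1 and deg f < t;
   evaluating v g and u f at m distinct points (for weights v, u without roots)
   and mixing the two values linearly gives linear maps A1, A2 : F^m -> F^(2m).
   The square is indexed by F^m x F^m, its entry at (x, y) being the base-q
   number whose digits encode the coordinates of A1 x + A2 y.
   Each of A1, A2, A1 + A2 and A1 - A2 is onto on any t coordinates, so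
   translating its image does not change the e-th power sums of the entries
   for e <= t. Rows, columns and both diagonals are such translates, the back
   diagonal because the digit of 1 - a is q - 1 minus the digit of a. Finally
   (x, y) |-> A1 x + A2 y is injective, so the entries are 0, ..., q^(2m) - 1. *)

Section Digits.
Variable q : nat.

Lemma sum_digits_recl n (d : 'I_n.+1 -> nat) :
  \sum_(i < n.+1) q ^ i * d i = d ord0 + q * \sum_(i < n) q ^ i * d (lift ord0 i).
Proof.
rewrite big_ord_recl expn0 mul1n big_distrr /=; congr (_ + _).
by apply: eq_bigr => i _; rewrite expnS mulnA.
Qed.

Lemma digit_split a b x y : a < q -> b < q -> a + q * x = b + q * y -> a = b /\ x = y.
Proof.
move=> ltaq ltbq eq_ab; have q_gt0 : 0 < q by case: q ltaq.
have eq_a : a = b.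
  by have := congr1 (modn^~ q) eq_ab; rewrite !(addnC _ (q * _)) !(mulnC q) !modnMDl !modn_small.
by split=> //; apply/eqP; rewrite -(eqn_pmul2l q_gt0) -(eqn_add2l a) {2}eq_a eq_ab.
Qed.

Lemma digits_ltn n (d : 'I_n -> nat) :
  (forall i, d i < q) -> \sum_(i < n) q ^ i * d i < q ^ n.
Proof.
elim: n d => [|n IHn] d ltdq; first by rewrite big_ord0.
rewrite sum_digits_recl expnS.
have := IHn _ (fun i => ltdq (lift ord0 i)); have := ltdq ord0.
set X := \sum_(i < n) _; set Y := q ^ n; nia.
Qed.

Lemma digits_inj n (d d' : 'I_n -> nat) :
  (forall i, d i < q) -> (forall i, d' i < q) ->
  \sum_(i < n) q ^ i * d i = \sum_(i < n) q ^ i * d' i -> d =1 d'.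
Proof.
elim: n d d' => [|n IHn] d d' ltdq ltd'q eq_d i; first by case: i.
rewrite !sum_digits_recl in eq_d.
have [eq0 eq_rest] : d ord0 = d' ord0 /\
    \sum_(i < n) q ^ i * d (lift ord0 i) = \sum_(i < n) q ^ i * d' (lift ord0 i).
  exact: digit_split (ltdq ord0) (ltd'q ord0) eq_d.
case: (unliftP ord0 i) => [j ->|->] //.
exact: (IHn _ _ (fun i => ltdq _) (fun i => ltd'q _) eq_rest).
Qed.

Lemma digits_max n : 0 < q -> (\sum_(i < n) q ^ i * q.-1).+1 = q ^ n.
Proof.
move=> q_gt0; elim: n => [|n IHn]; first by rewrite big_ord0.
rewrite big_ord_recr /= -addSn IHn expnS; set y := q ^ n; nia.
Qed.

End Digits.

Section RankBy.
Variables (T : finType) (key : T -> int).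

Definition rank_by (a : T) : nat := #|[set b | key b < key a]%R|.

Lemma rank_by_lt_card a : rank_by a < #|T|.
Proof.
rewrite -cardsT; apply: proper_card; apply/properP; split; first exact: subsetT.
by exists a; rewrite ?inE ?ltxx.
Qed.

Lemma ltn_rank_by a b : (key a < key b)%R -> rank_by a < rank_by b.
Proof.
move=> lt_ab; apply: proper_card; apply/properP; split.
  by apply/subsetP => c; rewrite !inE => /lt_trans; apply.
by exists a; rewrite !inE ?ltxx.
Qed.

Hypothesis key_inj : injective key.

Lemma rank_by_inj : injective rank_by.
Proof.
move=> a b eq_ab.
case: (ltgtP (key a) (key b)) => [/ltn_rank_by|/ltn_rank_by|/key_inj //];
  by rewrite eq_ab ltnn.
Qed.

Variable s : T -> T.
Hypotheses (sK : involutive s) (key_s : forall a, key (s a) = (- key a)%R).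

Lemma rank_by_involution a : rank_by (s a) = #|T|.-1 - rank_by a.
Proof.
have gtE : [set b | key b < key (s a)]%R = s @^-1: [set b | key a < key b]%R.
  by apply/setP => b; rewrite !inE !key_s ltrNr.
have cardT : #|T| = (rank_by a + #|[set b | key a < key b]%R|).+1.
  rewrite -(cardsC [set b | key b < key a]%R) -addnS; congr (_ + _).
  have -> : ~: [set b | key b < key a]%R = a |: [set b | key a < key b]%R.
    by apply/setP => b; rewrite !inE -leNgt le_eqVlt (inj_eq key_inj) eq_sym.
  by rewrite cardsU1 inE ltxx.
by rewrite cardT /rank_by gtE card_preimset; [lia | exact: inv_inj].
Qed.

End RankBy.

Section InvolutionKey.
Local Open Scope ring_scope.
Variables (T : finType) (s : T -> T) (r : T -> nat).
Hypotheses (sK : involutive s) (r_inj : injective r).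
Hypothesis s_fixed_uniq : forall a b, s a = a -> s b = b -> a = b.

Definition involution_key (a : T) : int :=
  if (r a < r (s a))%N then - (r a).+1%:Z
  else if (r (s a) < r a)%N then (r (s a)).+1%:Z else 0.

Lemma involution_keyN a : involution_key (s a) = - involution_key a.
Proof. by rewrite /involution_key sK; case: ltngtP; rewrite ?opprK ?oppr0. Qed.

Lemma involution_key_inj : injective involution_key.
Proof.
move=> a b; rewrite /involution_key.
case: ltngtP => ha; case: ltngtP => hb eq_ab; try lia.
- by apply: r_inj; lia.
- by apply: (can_inj sK); apply: r_inj; lia.
- by apply: s_fixed_uniq; apply: r_inj.
Qed.

End InvolutionKey.

Section FieldDigit.
Local Open Scope ring_scope.

Lemma subr_fixed_uniq (R : idomainType) (a b : R) : 1 - a = a -> 1 - b = b -> a = b.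
Proof.
have double_eq1 (c : R) : 1 - c = c -> c * 2%:R = 1.
  by move=> hc; rewrite mulr_natr mulr2n -{1}hc subrK.
move=> /double_eq1 ha /double_eq1 hb.
have two_neq0 : (2%:R : R) != 0.
  by apply/eqP => two0; move/eqP: ha; rewrite two0 mulr0 eq_sym oner_eq0.
by apply: (mulIf two_neq0); rewrite ha hb.
Qed.

Variable F : finFieldType.

Let fkey : F -> int := involution_key (fun a => 1 - a) (fun a => enum_rank a).

Let fkey_inj : injective fkey.
Proof.
apply: involution_key_inj; [exact: subKr | | exact: subr_fixed_uniq].
by move=> a b /val_inj/enum_rank_inj.
Qed.

Definition fdigit : F -> nat := rank_by fkey.

Lemma fdigit_ltn a : (fdigit a < #|F|)%N.
Proof. exact: rank_by_lt_card. Qed.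

Lemma fdigit_inj : injective fdigit.
Proof. exact: rank_by_inj fkey_inj. Qed.

Lemma fdigit_subr a : fdigit (1 - a) = (#|F|.-1 - fdigit a)%N.
Proof.
exact: (@rank_by_involution _ _ fkey_inj (fun b => 1 - b) (subKr 1) (involution_keyN _ (subKr 1))).
Qed.

Definition fdigits n (x : 'rV[F]_n) : nat := \sum_(j < n) #|F| ^ j * fdigit (x ord0 j).

Lemma fdigits_ltn n (x : 'rV[F]_n) : (fdigits x < #|F| ^ n)%N.
Proof. exact: digits_ltn (fun j => fdigit_ltn _). Qed.

Lemma fdigits_inj n : injective (@fdigits n).
Proof.
move=> x y /(digits_inj (fun j => fdigit_ltn _) (fun j => fdigit_ltn _)) eq_xy.
by apply/rowP => j; apply/fdigit_inj/eq_xy.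
Qed.

Lemma fdigits_subr n (x : 'rV[F]_n) :
  fdigits (const_mx 1 - x) = ((#|F| ^ n).-1 - fdigits x)%N.
Proof.
have F_gt0 : (0 < #|F|)%N by apply/card_gt0P; exists 0.
suff : ((fdigits (const_mx 1 - x)%R + fdigits x).+1 = #|F| ^ n)%N by lia.
rewrite -(@digits_max #|F| n F_gt0) /fdigits -big_split /=; congr _.+1.
apply: eq_bigr => j _; rewrite !mxE fdigit_subr -mulnDr subnK //.
by rewrite -ltnS prednK ?fdigit_ltn.
Qed.

Definition ford n (x : 'rV[F]_n) : 'I_(#|F| ^ n) := Ordinal (fdigits_ltn x).

Lemma ford_bij n : bijective (@ford n).
Proof.
apply: inj_card_bij; last by rewrite card_mx mul1n card_ord.
by move=> x y /(congr1 val) /fdigits_inj.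
Qed.

Lemma ford_subr n (x : 'rV[F]_n) : rev_ord (ford x) = ford (const_mx 1 - x).
Proof. by apply: val_inj; rewrite /= fdigits_subr subnS -!subn1 subnAC. Qed.

End FieldDigit.

Section CoordinatePowerSums.
Local Open Scope ring_scope.
Variables (K : finType) (A : zmodType) (R : comPzRingType) (h : K -> A -> R).

Definition coord_sum (w : {ffun K -> A}) : R := \sum_k h k (w k).

Lemma coord_sum_expr w e :
  coord_sum w ^+ e = \sum_(f : {ffun 'I_e -> K}) \prod_(l < e) h (f l) (w (f l)).
Proof. by rewrite -[in LHS](card_ord e) -prodr_const bigA_distr_bigA. Qed.

Variable V : finZmodType.

Definition strength (t : nat) (B : V -> {ffun K -> A}) :=
  forall S : {set K}, (#|S| <= t)%N -> forall z, exists y, {in S, B y =1 z}.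

Lemma sum_coord_sum_expr_shift t (B : V -> {ffun K -> A}) :
  {morph B : x y / x + y} -> strength t B ->
  forall e c, (e <= t)%N -> \sum_y coord_sum (B y + c) ^+ e = \sum_y coord_sum (B y) ^+ e.
Proof.
move=> BD strB e c le_et.
under eq_bigr do rewrite coord_sum_expr; under [RHS]eq_bigr do rewrite coord_sum_expr.
rewrite exchange_big [RHS]exchange_big; apply: eq_bigr => f _.
(* The monomial indexed by f involves at most e <= t coordinates, on which the
   shift by c is a translation of the summation variable. *)
have [y0 By0] : exists y0, {in f @: [set: 'I_e], B y0 =1 c}.
  by apply: strB; rewrite (leq_trans (leq_imset_card _ _)) ?cardsT ?card_ord.
rewrite [RHS](reindex_inj (addIr y0)); apply: eq_bigr => y _; apply: eq_bigr => l _.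
by rewrite BD !ffunE By0 // imset_f ?inE.
Qed.

End CoordinatePowerSums.

Section MagicFromLineSums.
Local Open Scope ring_scope.
Variables (V : finZmodType) (H : V -> V -> int) (rrow rcol rdiag ranti : int).
Hypotheses (rowH : forall x, \sum_y H x y = rrow) (colH : forall y, \sum_x H x y = rcol).
Hypotheses (diagH : forall d, \sum_x H x (x + d) = rdiag).
Hypotheses (antiH : forall d, \sum_x H x (d - x) = ranti).

Lemma line_sums_eq : [/\ rcol = rrow, rdiag = rrow & ranti = rrow].
Proof.
pose total := \sum_x \sum_y H x y.
have V_gt0 : (0 < #|V|)%N by apply/card_gt0P; exists 0.
have total_row : total = rrow *+ #|V|.
  by rewrite /total (eq_bigr _ (fun x _ => rowH x)) sumr_const.
have total_col : total = rcol *+ #|V|.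
  by rewrite /total exchange_big (eq_bigr _ (fun y _ => colH y)) sumr_const.
have total_diag : total = rdiag *+ #|V|.
  rewrite /total (eq_bigr (fun x => \sum_d H x (x + d))); last first.
    by move=> x _; rewrite (reindex_inj (addrI x)).
  by rewrite exchange_big (eq_bigr _ (fun d _ => diagH d)) sumr_const.
have total_anti : total = ranti *+ #|V|.
  rewrite /total (eq_bigr (fun x => \sum_d H x (d - x))); last first.
    by move=> x _; rewrite (reindex_inj (addIr (- x))).
  by rewrite exchange_big (eq_bigr _ (fun d _ => antiH d)) sumr_const.
by split; apply: (pmulrnI V_gt0); rewrite -total_row // ?total_col ?total_diag ?total_anti.
Qed.

Lemma general_magic_of_line_sums n (M : 'M[int]_n) (phi : 'I_n -> V) (c : V) :
  bijective phi -> (forall i, phi (rev_ord i) = c - phi i) ->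
  (forall i j, M i j = H (phi i) (phi j)) -> general_magic M.
Proof.
move=> phi_bij phi_rev ME; have [eq_col eq_diag eq_anti] := line_sums_eq.
have sum_phi (G : V -> int) : \sum_(i < n) G (phi i) = \sum_x G x.
  by rewrite (reindex phi (onW_bij _ phi_bij)).
exists rrow; split; [|split; [|split]].
- by move=> i; rewrite -(rowH (phi i)) -sum_phi; apply: eq_bigr => j _; rewrite ME.
- by move=> j; rewrite -eq_col -(colH (phi j)) -sum_phi; apply: eq_bigr => i _; rewrite ME.
- by rewrite -eq_diag -(diagH 0) -sum_phi; apply: eq_bigr => i _; rewrite ME addr0.
- by rewrite -eq_anti -(antiH c) -sum_phi; apply: eq_bigr => i _; rewrite ME phi_rev.
Qed.

End MagicFromLineSums.

Section PolyFacts.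
Local Open Scope ring_scope.

Lemma lagrange_interpolation (F : fieldType) (I : eqType) (pt h : I -> F) (s : seq I) :
  uniq (map pt s) ->
  exists2 p : {poly F}, (size p <= size s)%N & {in s, forall i, p.[pt i] = h i}.
Proof.
elim: s => [|i s IHs] /=; first by exists 0; rewrite ?size_poly0.
case/andP => i_notin_s /IHs [p size_p p_s].
pose Q := \prod_(j <- s) ('X - (pt j)%:P).
have rootQ x : root Q x = (x \in map pt s) by rewrite -root_prod_XsubC big_map.
have Qi_neq0 : Q.[pt i] != 0 by rewrite -rootE rootQ.
exists (p + ((h i - p.[pt i]) / Q.[pt i]) *: Q).
  rewrite (leq_trans (size_polyD _ _)) // geq_max (leq_trans size_p) //=.
  by rewrite (leq_trans (size_scale_leq _ _)) // size_prod_XsubC.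
move=> j; rewrite inE => /predU1P [->|j_s].
  by rewrite hornerD hornerZ divfK // addrC subrK.
have /eqP Qj : root Q (pt j) by rewrite rootQ map_f.
by rewrite hornerD hornerZ Qj mulr0 addr0 p_s.
Qed.

Lemma small_multiple_eq0 (R : idomainType) (r g h : {poly R}) :
  (size g < size r)%N -> g = r * h -> g = 0 /\ h = 0.
Proof.
move=> lt_gr g_rh; have r_neq0 : r != 0 by rewrite -size_poly_gt0 (leq_ltn_trans _ lt_gr).
have [h0 | h_neq0] := eqVneq h 0; first by rewrite g_rh h0 mulr0.
exfalso; move: lt_gr; rewrite g_rh size_mul //.
by have := size_poly_gt0 h; rewrite h_neq0; lia.
Qed.

Lemma exists_rootless_quadratic (F : finFieldType) : exists c : F, forall a, a ^+ 2 + a != c.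
Proof.
pose f (a : F) := a ^+ 2 + a.
case: (pickP [pred c | c \notin f @: setT]) => [c /= c_notin | all_in].
  by exists c => a; apply: contra c_notin => /eqP <-; apply/imsetP; exists a.
have /imset_injP f_inj : #|f @: [set: F]| == #|[set: F]|.
  suff -> : f @: [set: F] = [set: F] by [].
  by apply/setP => c; rewrite inE; apply/negbFE/all_in.
have f0 : f 0 = f (-1) by rewrite /f expr0n addr0 sqrrN expr1n subrr.
by move/eqP: (f_inj _ _ (in_setT _) (in_setT _) f0); rewrite eq_sym oppr_eq0 oner_eq0.
Qed.

End PolyFacts.

Section Construction.
Local Open Scope ring_scope.
Variables (F : finFieldType) (t : nat).
Hypothesis t_gt0 : (0 < t)%N.
Local Notation m := (2 * t - 1)%N.
Local Notation V := 'rV[F]_m.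
Local Notation K := ('I_m * bool)%type.
Local Notation W := {ffun K -> F}.

(* [coord x j] is 0 for j >= m; [lo_poly x] has the first t - 1 coordinates of x
   as coefficients and [hi_poly x] the last t. *)
Definition coord (x : V) (j : nat) : F := oapp (x 0) 0 (insub j).
Definition lo_poly (x : V) : {poly F} := \poly_(j < t.-1) coord x j.
Definition hi_poly (x : V) : {poly F} := \poly_(j < t) coord x (t.-1 + j).

Lemma coordD x y j : coord (x + y) j = coord x j + coord y j.
Proof. by rewrite /coord; case: insubP => [k _ _|_] /=; rewrite ?mxE ?addr0. Qed.

Lemma lo_polyD : {morph lo_poly : x y / x + y}.
Proof.
by move=> x y; apply/polyP => j; rewrite coefD !coef_poly; case: ifP; rewrite ?coordD ?addr0.
Qed.

Lemma hi_polyD : {morph hi_poly : x y / x + y}.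
Proof.
by move=> x y; apply/polyP => j; rewrite coefD !coef_poly; case: ifP; rewrite ?coordD ?addr0.
Qed.

Lemma lo_hi_poly_eq0 x : lo_poly x = 0 -> hi_poly x = 0 -> x = 0.
Proof.
move=> /polyP lo0 /polyP hi0; apply/rowP => k; rewrite mxE.
have coordE : coord x k = x 0 k by rewrite /coord valK.
case: (ltnP k t.-1) => [lt_kt | le_tk].
  by have := lo0 k; rewrite coef_poly lt_kt coordE coef0.
have := hi0 (k - t.-1)%N; rewrite coef_poly subnKC // coordE coef0.
by have := ltn_ord k; case: ifP => //; lia.
Qed.

Lemma lo_hi_poly_surj (g f : {poly F}) : (size g <= t.-1)%N -> (size f <= t)%N ->
  exists x, lo_poly x = g /\ hi_poly x = f.
Proof.
move=> size_g size_f.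
exists (\row_k if (k < t.-1)%N then g`_k else f`_(k - t.-1)); split.
  apply/polyP => j; rewrite coef_poly; case: ifP => [lt_jt | /negbT]; last first.
    by rewrite -leqNgt => /(leq_trans size_g) /(nth_default 0) ->.
  rewrite /coord; case: insubP => [k _ kE | ]; first by rewrite /= mxE kE lt_jt.
  by rewrite -leqNgt; lia.
apply/polyP => j; rewrite coef_poly; case: ifP => [lt_jt | /negbT]; last first.
  by rewrite -leqNgt => /(leq_trans size_f) /(nth_default 0) ->.
rewrite /coord; case: insubP => [k _ kE | ]; last by rewrite -leqNgt; lia.
by rewrite /= mxE kE ifN ?addKn //; lia.
Qed.

Variable c : F.
Hypothesis c_rootless : forall a, a ^+ 2 + a != c.

Definition quad : {poly F} := 'X^2 + 'X - c%:P.

Lemma horner_quad_expr_neq0 k a : (quad ^+ k).[a] != 0.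
Proof. by rewrite horner_exp expf_neq0 // !hornerE subr_eq0 c_rootless. Qed.

Lemma size_quad_expr k : size (quad ^+ k) = (k.*2).+1.
Proof.
have size_quad : size quad = 3%N.
  by rewrite /quad -addrA size_polyDl ?size_polyXn // size_XsubC.
have quad_neq0 : quad != 0 by rewrite -size_poly_eq0 size_quad.
by rewrite -[size _]prednK ?size_poly_gt0 ?expf_neq0 // size_exp size_quad /= mul2n.
Qed.

(* One weight is 1 and the other a power of a rootless quadratic of degree t or
   t - 1, depending on parity: this balance of degrees is what makes
   [weighted_eq0] work with only 2t - 1 evaluation points. *)
Definition lo_weight : {poly F} := if odd t then 1 else quad ^+ t./2.
Definition hi_weight : {poly F} := if odd t then quad ^+ t./2 else 1.

Lemma lo_weight_neq0 a : lo_weight.[a] != 0.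
Proof. by rewrite /lo_weight; case: ifP; rewrite ?hornerC ?oner_eq0 ?horner_quad_expr_neq0. Qed.

Lemma hi_weight_neq0 a : hi_weight.[a] != 0.
Proof. by rewrite /hi_weight; case: ifP; rewrite ?hornerC ?oner_eq0 ?horner_quad_expr_neq0. Qed.

Lemma size_quad_half : size (quad ^+ t./2) = (t.+1 - odd t)%N.
Proof. by rewrite size_quad_expr; have := odd_double_half t; case: (odd t) => /=; lia. Qed.

Variable pt : 'I_m -> F.
Hypothesis pt_inj : injective pt.

Lemma weighted_eq0 (g h : {poly F}) : (size g <= t.-1)%N -> (size h <= t)%N ->
  (forall k, lo_weight.[pt k] * g.[pt k] = hi_weight.[pt k] * h.[pt k]) -> g = 0 /\ h = 0.
Proof.
move=> size_g size_h eq_gh.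
have size_lo : (size lo_weight <= t.+1)%N.
  by rewrite /lo_weight; case: ifP => odd_t; rewrite ?size_quad_half ?odd_t ?size_poly1 /=; lia.
have size_hi : (size hi_weight <= t)%N.
  by rewrite /hi_weight; case: ifP => odd_t; rewrite ?size_quad_half ?odd_t ?size_poly1 /=; lia.
have eq_poly : lo_weight * g = hi_weight * h.
  apply/eqP; rewrite -subr_eq0; apply/eqP/(roots_geq_poly_eq0 (rs := map pt (enum 'I_m))).
  - by apply/allP => _ /mapP [k _ ->]; rewrite rootE !hornerE eq_gh subrr.
  - by rewrite map_inj_uniq ?enum_uniq.
  rewrite size_map -cardT card_ord (leq_trans (size_polyD _ _)) // size_polyN geq_max.
  apply/andP; split; apply: leq_trans (size_polyMleq _ _) _.
    by move: size_lo size_g; move: (size lo_weight) (size g) => a b; lia.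
  by move: size_hi size_h; move: (size hi_weight) (size h) => a b; lia.
move: eq_poly; rewrite /lo_weight /hi_weight; have := size_quad_half.
case: ifP => _ size_half; rewrite ?mul1r ?mulr1 => eq_poly.
  by apply: small_multiple_eq0 eq_poly; rewrite size_half (leq_ltn_trans size_g) //=; lia.
suff [-> ->] : h = 0 /\ g = 0 by [].
by apply: small_multiple_eq0 (esym eq_poly); rewrite size_half (leq_ltn_trans size_h) //=; lia.
Qed.

Definition lo_val (x : V) (k : 'I_m) : F := lo_weight.[pt k] * (lo_poly x).[pt k].
Definition hi_val (x : V) (k : 'I_m) : F := hi_weight.[pt k] * (hi_poly x).[pt k].

Lemma exists_prescribed_vals (P : {set 'I_m}) (G H : 'I_m -> F) : (#|P| <= t)%N ->
  (#|P| < t)%N \/ {in P, forall k, G k = 0} ->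
  exists x, {in P, forall k, lo_val x k = G k /\ hi_val x k = H k}.
Proof.
move=> card_P small_P.
have uniq_P : uniq (map pt (enum P)) by rewrite map_inj_uniq ?enum_uniq.
have [f size_f f_P] := lagrange_interpolation (fun k => H k / hi_weight.[pt k]) uniq_P.
have [g size_g g_P] : exists2 g : {poly F}, (size g <= t.-1)%N &
    {in P, forall k, lo_weight.[pt k] * g.[pt k] = G k}.
  case: small_P => [lt_Pt | G0]; last first.
    by exists 0; rewrite ?size_poly0 // => k kP; rewrite horner0 mulr0 G0.
  have [g size_g g_P] := lagrange_interpolation (fun k => G k / lo_weight.[pt k]) uniq_P.
  exists g => [|k kP]; first by rewrite (leq_trans size_g) // -cardE -ltnS prednK.
  by rewrite (g_P k) ?mem_enum // mulrC divfK ?lo_weight_neq0.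
have [|x [lo_x hi_x]] := lo_hi_poly_surj size_g (f := f).
  by rewrite (leq_trans size_f) // -cardE.
exists x => k kP; rewrite /lo_val /hi_val lo_x hi_x g_P //.
by rewrite (f_P k) ?mem_enum // mulrC divfK ?hi_weight_neq0.
Qed.

Lemma weighted_comb_eq0 (u b : F) (z x y : V) :
  (forall k, u * lo_val z k + hi_val x k + b * hi_val y k = 0) ->
  u *: lo_poly z = 0 /\ hi_poly x + b *: hi_poly y = 0.
Proof.
move=> eq0; have size_hi (w : V) : (size (hi_poly w) <= t)%N by apply: size_poly.
suff [-> /eqP] : u *: lo_poly z = 0 /\ - (hi_poly x + b *: hi_poly y) = 0.
  by rewrite oppr_eq0 => /eqP.
apply: weighted_eq0 => [||k].
- exact: leq_trans (size_scale_leq _ _) (size_poly _ _).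
- rewrite size_polyN (leq_trans (size_polyD _ _)) // geq_max size_hi.
  exact: leq_trans (size_scale_leq _ _) _.
apply/eqP; rewrite -subr_eq0; apply/eqP; rewrite -[RHS](eq0 k) /lo_val /hi_val.
by rewrite !(hornerZ, hornerN, hornerD); ring.
Qed.

Definition mix_ok (a b a' b' : F) := [&& b != 0, b' != 0 & a * b' - b * a' != 0].

Definition mix (a b a' b' : F) (x : V) : W :=
  [ffun kb : K => if kb.2 then a' * lo_val x kb.1 + b' * hi_val x kb.1
                  else a * lo_val x kb.1 + b * hi_val x kb.1].

Lemma mix_top a b a' b' x k : mix a b a' b' x (k, false) = a * lo_val x k + b * hi_val x k.
Proof. by rewrite ffunE. Qed.

Lemma mix_bot a b a' b' x k : mix a b a' b' x (k, true) = a' * lo_val x k + b' * hi_val x k.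
Proof. by rewrite ffunE. Qed.

Lemma mixD a b a' b' : {morph mix a b a' b' : x y / x + y}.
Proof.
move=> x y; apply/ffunP => kb; rewrite !ffunE /lo_val /hi_val lo_polyD hi_polyD !hornerD.
by case: ifP => _; ring.
Qed.

Lemma mixB a b a' b' : {morph mix a b a' b' : x y / x - y}.
Proof. by move=> x y; apply/eqP; rewrite eq_sym subr_eq -mixD subrK. Qed.

Lemma mix_paramsD a b a' b' e f e' f' x :
  mix a b a' b' x + mix e f e' f' x = mix (a + e) (b + f) (a' + e') (b' + f') x.
Proof. by apply/ffunP => kb; rewrite !ffunE; case: ifP => _; ring. Qed.

Lemma mix_paramsB a b a' b' e f e' f' x :
  mix a b a' b' x - mix e f e' f' x = mix (a - e) (b - f) (a' - e') (b' - f') x.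
Proof. by apply/ffunP => kb; rewrite !ffunE; case: ifP => _; ring. Qed.

Lemma mix_strength a b a' b' : mix_ok a b a' b' -> strength t (mix a b a' b').
Proof.
case/and3P=> b_neq0 b'_neq0 det_neq0 S card_S z.
pose both k := ((k, false) \in S) && ((k, true) \in S).
pose D := a * b' - b * a'.
pose G k := if both k then (b' * z (k, false) - b * z (k, true)) / D else 0.
pose H k := if both k then (a * z (k, true) - a' * z (k, false)) / D
            else if (k, false) \in S then z (k, false) / b else z (k, true) / b'.
have [x x_P] : exists x, {in [set kb.1 | kb in S], forall k,
    lo_val x k = G k /\ hi_val x k = H k}.
  apply: exists_prescribed_vals; first exact: leq_trans (leq_imset_card _ _) card_S.
  have [/existsP [k both_k] | /existsPn no_both] := boolP [exists k, both k]; [left | right].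
    apply: leq_trans card_S; rewrite ltn_neqAle leq_imset_card andbT.
    apply/negP => /imset_injP inj1; case/andP: both_k => kfS ktS.
    by have := inj1 _ _ kfS ktS erefl.
  by move=> k _; rewrite /G (negbTE (no_both k)).
exists x => -[k bit] kbS.
have kP : k \in [set kb.1 | kb in S] by apply/imsetP; exists (k, bit).
rewrite ffunE /=; have [-> ->] := x_P k kP; rewrite /G /H.
case both_k: (both k); first by case: bit {kbS} => /=; rewrite /D; field.
case: bit kbS => kbS /=; last by rewrite kbS mulr0 add0r mulrC divfK.
have -> : ((k, false) \in S) = false by move: both_k; rewrite /both kbS andbT.
by rewrite mulr0 add0r mulrC divfK.
Qed.

Variables (b1 b2 g : F).
Hypotheses (col_ok : mix_ok 0 b1 g b2) (sum_ok : mix_ok 1 (1 + b1) g (1 + b2)).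
Hypotheses (diff_ok : mix_ok 1 (1 - b1) (- g) (1 - b2)) (b1_neq_b2 : b1 != b2).

Definition rowmix := mix 1 1 0 1.
Definition colmix := mix 0 b1 g b2.

Lemma rowmix_colmix_eq0 x y : rowmix x + colmix y = 0 -> x = 0 /\ y = 0.
Proof.
move=> /ffunP eq0; have [_ _ det_col] := and3P col_ok.
have g_neq0 : g != 0 by apply: contraNneq det_col => ->; rewrite mulr0 mul0r subrr.
have [lo_y0 hi_xy2] : g *: lo_poly y = 0 /\ hi_poly x + b2 *: hi_poly y = 0.
  apply: weighted_comb_eq0 => k; have := eq0 (k, true).
  by rewrite ffunE /rowmix /colmix !mix_bot ffunE => <-; ring.
have [lo_x0 hi_xy1] : 1 *: lo_poly x = 0 /\ hi_poly x + b1 *: hi_poly y = 0.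
  apply: weighted_comb_eq0 => k; have := eq0 (k, false).
  by rewrite ffunE /rowmix /colmix !mix_top ffunE => <-; ring.
have hi_y0 : hi_poly y = 0.
  have : (b1 - b2) *: hi_poly y = (hi_poly x + b1 *: hi_poly y) - (hi_poly x + b2 *: hi_poly y).
    by rewrite scalerBl opprD addrACA subrr add0r.
  by rewrite hi_xy1 hi_xy2 subrr => /eqP; rewrite scaler_eq0 subr_eq0 (negbTE b1_neq_b2) => /eqP.
have hi_x0 : hi_poly x = 0 by move: hi_xy1; rewrite hi_y0 scaler0 addr0.
split; apply: lo_hi_poly_eq0 => //; first by rewrite -[lo_poly x]scale1r.
by move/eqP: lo_y0; rewrite scaler_eq0 (negbTE g_neq0) => /eqP.
Qed.

Lemma rowmix_colmix_inj x y x' y' :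
  rowmix x + colmix y = rowmix x' + colmix y' -> x = x' /\ y = y'.
Proof.
move=> eq_xy; have [] : x - x' = 0 /\ y - y' = 0.
  by apply: rowmix_colmix_eq0; rewrite /rowmix /colmix !mixB addrACA -opprD eq_xy subrr.
by move=> /eqP; rewrite subr_eq0 => /eqP -> /eqP; rewrite subr_eq0 => /eqP ->.
Qed.

Definition entry (w : W) : int := coord_sum (fun k a => (#|F| ^ enum_rank k * fdigit a)%N%:Z) w.

Lemma entry_fdigits w : entry w = (fdigits (\row_(i < #|{: K}|) w (enum_val i)))%:Z.
Proof.
rewrite /entry /coord_sum /fdigits (big_morph Posz PoszD (erefl _)).
rewrite (reindex (fun i : 'I_#|{: K}| => enum_val i)).
  by apply: eq_bigr => i _; rewrite enum_valK mxE.
exact/onW_bij/(Bijective enum_valK enum_rankK).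
Qed.

Lemma entry_bounds w : 0 <= entry w < ((#|F| ^ m) ^ 2)%N%:Z.
Proof.
rewrite entry_fdigits ltz_nat -expnM (leq_trans (fdigits_ltn _)) //.
by rewrite card_prod card_ord card_bool mulnC.
Qed.

Lemma entry_inj : injective entry.
Proof.
move=> w w'; rewrite !entry_fdigits => /eqP; rewrite eqz_nat => /eqP /fdigits_inj /rowP eq_w.
by apply/ffunP => k; have := eq_w (enum_rank k); rewrite !mxE enum_rankK.
Qed.

Definition ms_matrix (phi : 'I_(#|F| ^ m) -> V) : 'M[int]_(#|F| ^ m) :=
  \matrix_(i, j) entry (rowmix (phi i) + colmix (phi j)).

Variable phi : 'I_(#|F| ^ m) -> V.
Hypotheses (phi_bij : bijective phi) (phi_rev : forall i, phi (rev_ord i) = const_mx 1 - phi i).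

Lemma ms_matrix_multimagic : general_multimagic t (ms_matrix phi).
Proof.
move=> e /andP [_ le_et]; set E := fun x y => entry (rowmix x + colmix y) ^+ e.
have row_ok : mix_ok 1 1 0 1 by rewrite /mix_ok oner_eq0 mulr1 mulr0 subr0 oner_eq0.
have shift a b a' b' : mix_ok a b a' b' -> forall d,
    \sum_x entry (mix a b a' b' x + d) ^+ e = \sum_x entry (mix a b a' b' x) ^+ e.
  by move=> ok d; apply: sum_coord_sum_expr_shift (mixD _ _ _ _) (mix_strength ok) _ _ le_et.
have rowE x : \sum_y E x y = \sum_y entry (colmix y) ^+ e.
  by under eq_bigr do rewrite /E addrC; apply: shift.
have colE y : \sum_x E x y = \sum_x entry (rowmix x) ^+ e by apply: shift.
have diagE d : \sum_x E x (x + d) = \sum_x entry (mix 1 (1 + b1) g (1 + b2) x) ^+ e.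
  under eq_bigr do rewrite /E /colmix mixD addrA /rowmix mix_paramsD addr0 add0r.
  exact: shift.
have antiE d : \sum_x E x (d - x) = \sum_x entry (mix 1 (1 - b1) (- g) (1 - b2) x) ^+ e.
  under eq_bigr do rewrite /E /colmix mixB addrCA addrC /rowmix mix_paramsB subr0 sub0r.
  exact: shift.
apply: (general_magic_of_line_sums rowE colE diagE antiE phi_bij phi_rev) => i j.
by rewrite !mxE.
Qed.

Lemma ms_matrix_consecutive : consecutive_entries (ms_matrix phi).
Proof.
exists 0; split=> [i j | i j k l]; first by rewrite mxE add0r entry_bounds.
by rewrite !mxE => /entry_inj /rowmix_colmix_inj [/(bij_inj phi_bij) -> /(bij_inj phi_bij) ->].
Qed.

End Construction.

Lemma exists_notin (T : finType) (s : seq T) : (size s < #|T|)%N -> exists x, x \notin s.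
Proof.
move=> lt_sT; case: (pickP [pred x | x \notin s]) => [x /= x_s | all_in]; first by exists x.
suff : (#|T| <= size s)%N by rewrite leqNgt lt_sT.
apply: leq_trans (card_size s); apply/subset_leq_card/subsetP => x _.
exact/negbFE/all_in.
Qed.

Section MixParameters.
Local Open Scope ring_scope.

Lemma exists_mix_params (F : finFieldType) : (4 < #|F|)%N ->
  exists b1 b2 g : F, [/\ mix_ok 0 b1 g b2, mix_ok 1 (1 + b1) g (1 + b2),
                          mix_ok 1 (1 - b1) (- g) (1 - b2) & b1 != b2].
Proof.
move=> F_gt4; have avoid (s : seq F) : (size s <= 4)%N -> exists x, x \notin s.
  by move=> s4; apply: exists_notin; apply: leq_ltn_trans F_gt4.
have [b1] := avoid [:: 0; 1; -1] isT.
have [b2] := avoid [:: 0; 1; -1; b1] isT.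
have [g] := avoid [:: 0; (1 + b2) / (1 + b1); - ((1 - b2) / (1 - b1))] isT.
rewrite !inE !negb_or => /and3P [g0 g_sum g_diff] /and4P [b2_0 b2_1 b2_m1 b12].
case/and3P => b1_0 b1_1 b1_m1.
have det_neq0 (u v x : F) : u != 0 -> x != v / u -> v - u * x != 0.
  by move=> u0; apply: contra; rewrite subr_eq0 => /eqP ->; rewrite mulrAC divff ?mul1r.
have add_neq0 (a : F) : a != -1 -> 1 + a != 0 by rewrite addrC addr_eq0.
have sub_neq0 (a : F) : a != 1 -> 1 - a != 0 by rewrite subr_eq0 eq_sym.
exists b1, b2, g; split; rewrite // /mix_ok ?mul1r.
- by rewrite b1_0 b2_0 mul0r sub0r oppr_eq0 mulf_neq0.
- by rewrite !add_neq0 ?det_neq0 ?add_neq0.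
- by rewrite !sub_neq0 ?det_neq0 ?sub_neq0 // eqr_oppLR.
- by rewrite eq_sym.
Qed.

End MixParameters.

Theorem corollary4p1 (t q : nat) :
  (3 <= t)%N -> prime_power q -> (2 * t - 1 <= q)%N -> (q < 4 * t - 3)%N ->
  exists M : 'M[int]_(q ^ (2 * t - 1)), is_MS t M.
Proof.
move=> t_ge3 [p [k [p_prime [k_gt0 ->]]]] le_mq _.
have [F _ cardF] := pPrimePowerField p_prime k_gt0.
rewrite -cardF in le_mq *.
have t_gt0 : (0 < t)%N by lia.
have [c c_rootless] := exists_rootless_quadratic F.
have [|b1 [b2 [g [col_ok sum_ok diff_ok b12]]]] := @exists_mix_params F; first by lia.
pose pt (i : 'I_(2 * t - 1)) : F := enum_val (widen_ord le_mq i).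
have pt_inj : injective pt by move=> i j /enum_val_inj /(congr1 val) eq_ij; apply: val_inj.
have [phi fordK phiK] := ford_bij F (2 * t - 1).
have phi_bij : bijective phi by exists (@ford F _).
have phi_rev i : phi (rev_ord i) = (const_mx 1 - phi i)%R.
  by rewrite -{1}(phiK i) ford_subr fordK.
exists (ms_matrix c pt b1 b2 g phi); split.
- exact: (ms_matrix_multimagic t_gt0 c_rootless pt_inj col_ok sum_ok diff_ok phi_bij phi_rev).
- exact: (ms_matrix_consecutive t_gt0 c pt_inj col_ok b12 phi_bij).
Qed.
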